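(* Let $N\ge3$, $N=2g+1$ or $2g+2$ with $g\ge1$. On the $(2g+1)$-dimensional space with coordinates $(\lambda_1,\dots,\lambda_g,z_1,\dots,z_g,v)$ (with $\lambda_j$ pairwise distinct and nonzero) consider the Poisson brackets $$\{\lambda_j,z_k\}=\delta_{jk}z_k,\quad \{\lambda_j,\lambda_k\}=\{z_j,z_k\}=\{\lambda_j,v\}=\{z_j,v\}=0.$$ Put $b_0=1,\tilde a_0=0$ if $N=2g+1$ and $b_0=v,\tilde a_0=1$ if $N=2g+2$, and define $$B(\lambda)=b_0\prod_{j=1}^g(\lambda-\lambda_j),\qquad \tilde A(\lambda)=\Bigl(\frac{\tilde a_0}{b_0}+\sum_{j=1}^g\frac{z_j}{B'(\lambda_j)(\lambda-\lambda_j)\lambda_j}\Bigr)B(\lambda).$$ Then, for independent parameters $\lambda,\mu$, $$\{\tilde A(\lambda),\tilde A(\mu)\}=\{B(\lambda),B(\mu)\}=0,\qquad \{\tilde A(\lambda),B(\mu)\}=\frac{B(\lambda)\tilde A(\mu)-\tilde A(\lambda)B(\mu)}{\lambda-\mu}.$$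
   Context: $B'(\lambda_j)=b_0\prod_{k\ne j}(\lambda_j-\lambda_k)$. $\tilde A$ is the unique polynomial of degree $\le g$ with leading coefficient $\tilde a_0$ at $\lambda^g$ and $\tilde A(\lambda_j)\lambda_j=z_j$. Brackets of polynomials in $\lambda$ are taken coefficientwise. *)

From HB Require Import structures.
From mathcomp Require Import all_boot all_order all_algebra.
From mathcomp Require Import all_classical all_reals all_analysis.
Set Implicit Arguments. Unset Strict Implicit. Unset Printing Implicit Defensive.
Import Order.TTheory GRing.Theory Num.Theory.
Import numFieldNormedType.Exports.
Local Open Scope ring_scope.

Section Defs.
Variables (R : realType) (g : nat).

(* Phase space R^(2g+1) with coordinates (lambda_1..lambda_g, z_1..z_g, v),
   stored in a row vector: lambda_j at index j, z_j at index g+j, v at 2g. *)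
Definition pt := 'rV[R]_(g + g).+1.
Definition lam_idx (j : 'I_g) : 'I_(g + g).+1 := inord j.
Definition z_idx (j : 'I_g) : 'I_(g + g).+1 := inord (g + j).
Definition v_idx : 'I_(g + g).+1 := inord (g + g).

Definition lam (x : pt) (j : 'I_g) : R := x ord0 (lam_idx j).
Definition zc (x : pt) (j : 'I_g) : R := x ord0 (z_idx j).
Definition vc (x : pt) : R := x ord0 v_idx.

Definition pd (F : pt -> R) (x : pt) (i : 'I_(g + g).+1) : R :=
  'D_(delta_mx ord0 i) F x.

(* The Poisson bracket determined (via the Leibniz rule) by
   {lambda_j, z_k} = delta_jk z_k, all other coordinate brackets 0:
   {F,G} = sum_j z_j (dF/dlambda_j dG/dz_j - dF/dz_j dG/dlambda_j). *)
Definition pbr (F G : pt -> R) (x : pt) : R :=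
  \sum_(j < g) zc x j *
    (pd F x (lam_idx j) * pd G x (z_idx j) - pd F x (z_idx j) * pd G x (lam_idx j)).

Definition b0 (N : nat) (x : pt) : R := if odd N then 1 else vc x.
Definition a0t (N : nat) : R := if odd N then 0 else 1.

Definition Bpol (N : nat) (x : pt) : {poly R} :=
  b0 N x *: \prod_(j < g) ('X - (lam x j)%:P).

(* tilde A(lambda) = (a0/b0 + sum_j z_j / (B'(lambda_j) (lambda - lambda_j) lambda_j)) B(lambda),
   with B(lambda)/(lambda - lambda_j) the exact polynomial quotient. *)
Definition Atil (N : nat) (x : pt) : {poly R} :=
  (a0t N / b0 N x) *: Bpol N x +
  \sum_(j < g) (zc x j / ((Bpol N x)^`().[lam x j] * lam x j)) *:
                 (Bpol N x %/ ('X - (lam x j)%:P)).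

End Defs.

(* Every partial derivative of A~(t) and B(t) along lambda_j or z_j is
   P_j(t) = prod_(k <> j) (t - lambda_k) times a factor independent of t.  This
   is clear except for A~(t) along lambda_j, where the summand of index k <> j
   depends on lambda_j through (t - lambda_j) / (lambda_k - lambda_j), whose
   lambda_j-derivative (t - lambda_k) / (lambda_k - lambda_j)^2 supplies the
   factor t - lambda_k missing from P_j(t).  The j-th summand of a bracket is
   thus z_j P_j(lambda) P_j(mu) times a 2x2 determinant of these factors: it
   vanishes for {A~, A~}, and for {B, B} because B does not depend on z; for
   {A~, B} the summands add up to the right-hand side by the partial-fraction
   form of A~. *)

From HB Require Import structures.
From mathcomp Require Import all_boot all_order all_algebra.
From mathcomp Require Import all_classical all_reals all_analysis.
From mathcomp Require Import ring zify.
Set Implicit Arguments. Unset Strict Implicit. Unset Printing Implicit Defensive.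
Import Order.TTheory GRing.Theory Num.Theory.
Import numFieldNormedType.Exports.
Local Open Scope ring_scope.

Section Nodes.
Variables (R : fieldType) (g : nat).
Implicit Types (l z : 'I_g -> R) (j k : 'I_g) (a b h s t : R).

Definition prod_except l j t := \prod_(k < g | k != j) (t - l k).
Definition prod_except2 l j k t := \prod_(m < g | (m != j) && (m != k)) (t - l m).
Definition node_weight l j := (prod_except l j (l j) * l j)^-1.
Definition Aform a l z t :=
  a * \prod_(k < g) (t - l k) + \sum_(k < g) z k * node_weight l k * prod_except l k t.
Definition shift_at l j h : 'I_g -> R := fun k => l k + h * (j == k)%:R.

Lemma prod_sub_except l j t :
  \prod_(k < g) (t - l k) = (t - l j) * prod_except l j t.
Proof. by rewrite (bigD1 j). Qed.

Lemma prod_except_split l j k t : k != j ->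
  prod_except l j t = (t - l k) * prod_except2 l j k t.
Proof. by move=> kj; rewrite /prod_except (bigD1 k) //= andbC. Qed.

Lemma prod_except2C l j k t : prod_except2 l j k t = prod_except2 l k j t.
Proof. by apply: eq_bigl => m; rewrite andbC. Qed.

Lemma shift_at_self l j h : shift_at l j h j = l j + h.
Proof. by rewrite /shift_at eqxx mulr1. Qed.

Lemma shift_at_other l j h k : k != j -> shift_at l j h k = l k.
Proof. by move=> kj; rewrite /shift_at eq_sym (negbTE kj) mulr0 addr0. Qed.

Lemma prod_except_shift_at l j h t :
  prod_except (shift_at l j h) j t = prod_except l j t.
Proof. by apply: eq_bigr => k kj; rewrite shift_at_other. Qed.

Lemma prod_except2_shift_at l j k h t :
  prod_except2 (shift_at l j h) k j t = prod_except2 l k j t.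
Proof. by apply: eq_bigr => m /andP[_ mj]; rewrite shift_at_other. Qed.

Lemma Aform_shift_z a l z j h t :
  Aform a l (shift_at z j h) t =
    Aform a l z t + h * (node_weight l j * prod_except l j t).
Proof.
rewrite /Aform -addrA; congr (_ + _).
under eq_bigr do rewrite /shift_at !mulrDl.
rewrite big_split /=; congr (_ + _).
rewrite (bigD1 j) //= eqxx mulr1 big1 ?addr0 => [|k kj]; first by rewrite mulrA.
by rewrite eq_sym (negbTE kj) mulr0 !mul0r.
Qed.

Lemma Aform_shift_lam a l z j h t :
  Aform a (shift_at l j h) z t =
    a * prod_except l j t * (t - l j - h)
  + z j * prod_except l j t * node_weight (shift_at l j h) j
  + \sum_(k < g | k != j) z k * prod_except2 l k j t / (prod_except2 l k j (l k) * l k)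
                          * ((t - l j - h) / (l k - l j - h)).
Proof.
rewrite /Aform (prod_sub_except _ j) shift_at_self prod_except_shift_at.
rewrite (bigD1 j) //= prod_except_shift_at addrA; congr (_ + _); first by ring.
apply: eq_bigr => k kj; have jk : j != k by rewrite eq_sym.
rewrite /node_weight !(prod_except_split _ _ jk) !prod_except2_shift_at shift_at_other //.
rewrite shift_at_self !opprD !addrA !invfM; ring.
Qed.

Lemma cross_difference_Aform a b l z s t : s != t ->
  (b * \prod_(k < g) (s - l k) * Aform a l z t
     - Aform a l z s * (b * \prod_(k < g) (t - l k))) / (s - t)
  = b * \sum_(k < g) z k * node_weight l k * (prod_except l k s * prod_except l k t).
Proof.
move=> st; rewrite /Aform.
set Ps := \prod_(k < g) (s - _); set Pt := \prod_(k < g) (t - _).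
set As := \sum_(k < g) _ * prod_except l k s.
set At := \sum_(k < g) _ * prod_except l k t.
have -> : b * Ps * (a * Pt + At) - (a * Ps + As) * (b * Pt) =
          b * (Ps * At - As * Pt) by ring.
rewrite mulr_sumr mulr_suml -sumrB -mulrA; congr (_ * _).
apply: (@mulIf _ (s - t)); first by rewrite subr_eq0.
rewrite divfK ?subr_eq0 // mulr_suml; apply: eq_bigr => k _.
rewrite /Ps /Pt !(prod_sub_except l k); ring.
Qed.

End Nodes.

Lemma is_derive_bigsum (R : numFieldType) (V W : normedModType R) (I : finType)
    (P : pred I) (f : I -> V -> W) (df : I -> W) (x v : V) :
  (forall i, P i -> is_derive x v (f i) (df i)) ->
  is_derive x v (fun y => \sum_(i | P i) f i y) (\sum_(i | P i) df i).
Proof.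
move=> fdf; rewrite -fct_sumE.
elim/big_ind2 : _ => // [|? ? ? ? ? ?]; [exact: is_derive_cst | exact: is_deriveD].
Qed.

Lemma derivable_bigprod (R : numFieldType) (V : normedModType R) (I : finType)
    (P : pred I) (f : I -> V -> R) (x v : V) :
  (forall i, P i -> derivable (f i) x v) ->
  derivable (fun y => \prod_(i | P i) f i y) x v.
Proof.
move=> df; rewrite -fct_prodE.
elim/big_ind : _ => // ? ? ? ?; exact: derivableM.
Qed.

Section RealDerivatives.
Variable R : realType.

Lemma is_derive_const_sub (u x : R) : is_derive x 1 (fun h => u - h) (-1).
Proof.
apply: is_derive_eq (is_deriveB (is_derive_cst u x 1) (is_derive_id x 1)) _.
by rewrite sub0r.
Qed.

Lemma is_derive_sub_ratio (u v : R) : v != 0 ->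
  is_derive (0 : R) 1 (fun h => (u - h) / (v - h)) ((u - v) / v ^+ 2).
Proof.
move=> v0; have v0' : v - 0 != 0 by rewrite subr0.
apply: is_derive_eq (is_deriveM (is_derive_const_sub u 0)
  (is_deriveV (f := fun h => v - h) v0' (is_derive_const_sub v 0))) _.
by rewrite !subr0 /GRing.scale /=; field; rewrite v0.
Qed.

Variable g : nat.
Implicit Types (l z : 'I_g -> R) (j k : 'I_g) (a t : R).

Lemma derivable_node_weight_shift_at l j : prod_except l j (l j) * l j != 0 ->
  derivable (fun h => node_weight (shift_at l j h) j) 0 1.
Proof.
move=> w0; have -> : (fun h => node_weight (shift_at l j h) j) =
    (fun h => (prod_except l j (l j + h) * (l j + h))^-1).
  by apply/funext => h; rewrite /node_weight prod_except_shift_at shift_at_self.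
apply: derivableV; first by rewrite addr0.
have dP : derivable (fun h => prod_except l j (l j + h)) 0 1.
  apply: derivable_bigprod => k _.
  by have [] := is_deriveB (is_derive_cst (l j) (0 : R) 1) (is_derive_const_sub (l k) 0).
have dlj := is_deriveD (is_derive_cst (l j) (0 : R) 1) (is_derive_id (0 : R) 1).
by have [] := is_deriveM (derivableP dP) dlj.
Qed.

Lemma is_derive_Aform_z a l z j t :
  is_derive (0 : R) 1 (fun h => Aform a l (shift_at z j h) t)
    (node_weight l j * prod_except l j t).
Proof.
set c := node_weight l j * prod_except l j t.
have -> : (fun h => Aform a l (shift_at z j h) t) = (fun h => Aform a l z t + h * c).
  by apply/funext => h; rewrite Aform_shift_z.
have dc := is_deriveM (is_derive_id (0 : R) 1) (is_derive_cst c (0 : R) 1).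
apply: is_derive_eq (is_deriveD (is_derive_cst (Aform a l z t) (0 : R) 1) dc) _.
by rewrite /GRing.scale /=; ring.
Qed.

(* The derivative of the weight of node j along its own line is never evaluated:
   it cancels in every bracket. *)
Definition Aform_lam_rate a l z j : R :=
  - a + z j * 'D_1 (fun h => node_weight (shift_at l j h) j) 0
  + \sum_(k < g | k != j) z k / (prod_except2 l k j (l k) * l k * (l k - l j) ^+ 2).

Lemma is_derive_Aform_lam a l z j t :
  (forall k, k != j -> l k != l j) -> l j != 0 ->
  is_derive (0 : R) 1 (fun h => Aform a (shift_at l j h) z t)
    (Aform_lam_rate a l z j * prod_except l j t).
Proof.
move=> l_inj lj0.
have w0 : prod_except l j (l j) * l j != 0.
  by rewrite mulf_neq0 //; apply/prodf_neq0 => k kj; rewrite subr_eq0 eq_sym l_inj.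
have dw := derivableP (derivable_node_weight_shift_at w0).
have d1 := is_deriveZ (a * prod_except l j t) (is_derive_const_sub (t - l j) 0).
have d2 := is_deriveZ (z j * prod_except l j t) dw.
pose c k := z k * prod_except2 l k j t / (prod_except2 l k j (l k) * l k).
have d3 : is_derive (0 : R) 1
    (fun h => \sum_(k < g | k != j) c k * ((t - l j - h) / (l k - l j - h)))
    (\sum_(k < g | k != j) c k * ((t - l j - (l k - l j)) / (l k - l j) ^+ 2)).
  apply: is_derive_bigsum => k kj.
  by apply: is_deriveZ; apply: is_derive_sub_ratio; rewrite subr_eq0 l_inj.
have -> : (fun h => Aform a (shift_at l j h) z t) = (fun h =>
    a * prod_except l j t * (t - l j - h)
  + z j * prod_except l j t * node_weight (shift_at l j h) j
  + \sum_(k < g | k != j) c k * ((t - l j - h) / (l k - l j - h))).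
  by apply/funext => h; rewrite Aform_shift_lam.
apply: is_derive_eq (is_deriveD (is_deriveD d1 d2) d3) _.
rewrite /Aform_lam_rate /GRing.scale /= !mulrDl mulr_suml; congr (_ + _); first by ring.
apply: eq_bigr => k kj; rewrite /c (prod_except_split _ _ kj) prod_except2C !invfM; ring.
Qed.

End RealDerivatives.

Section PhaseSpace.
Variables (R : realType) (g : nat).
Implicit Types (x : pt R g) (F : pt R g -> R) (j k : 'I_g).

Lemma pd_is_derive F x i (f : R -> R) d :
  (forall h, F (h *: delta_mx ord0 i + x) = f h) -> is_derive (0 : R) 1 f d ->
  pd F x i = d.
Proof.
move=> Ff fd; have <- : 'D_1 f 0 = d by exact: derive_val.
rewrite /pd /derive /=; do 2 f_equal.
by apply/funext => h /=; rewrite -!Ff scale0r add0r addr0 [h *: 1]mulr1.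
Qed.

Lemma coord_line x (i m : 'I_(g + g).+1) h :
  (h *: delta_mx ord0 i + x) ord0 m = x ord0 m + h * (i == m)%:R.
Proof. by rewrite !mxE eqxx /= addrC eq_sym. Qed.

Lemma lam_idx_val j : val (lam_idx j) = j.
Proof. by rewrite /= inordK //; have := ltn_ord j; lia. Qed.

Lemma z_idx_val j : val (z_idx j) = (g + j)%N.
Proof. by rewrite /= inordK //; have := ltn_ord j; lia. Qed.

Lemma v_idx_val : val (v_idx g) = (g + g)%N.
Proof. by rewrite /= inordK. Qed.

Lemma lam_idx_eq j k : (lam_idx j == lam_idx k) = (j == k).
Proof. by rewrite -val_eqE /= !lam_idx_val. Qed.

Lemma z_idx_eq j k : (z_idx j == z_idx k) = (j == k).
Proof. by rewrite -val_eqE /= !z_idx_val eqn_add2l. Qed.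

Lemma lam_z_idx_eq j k : (lam_idx j == z_idx k) = false.
Proof. by rewrite -val_eqE /= lam_idx_val z_idx_val; have := ltn_ord j; lia. Qed.

Lemma lam_v_idx_eq j : (lam_idx j == v_idx g) = false.
Proof. by rewrite -val_eqE /= lam_idx_val v_idx_val; have := ltn_ord j; lia. Qed.

Lemma z_v_idx_eq j : (z_idx j == v_idx g) = false.
Proof. by rewrite -val_eqE /= z_idx_val v_idx_val; have := ltn_ord j; lia. Qed.

Lemma lam_line_lam x j h :
  lam (h *: delta_mx ord0 (lam_idx j) + x) = shift_at (lam x) j h.
Proof. by apply/funext => k; rewrite /lam coord_line lam_idx_eq. Qed.

Lemma zc_line_lam x j h : zc (h *: delta_mx ord0 (lam_idx j) + x) = zc x.
Proof. by apply/funext => k; rewrite /zc coord_line lam_z_idx_eq mulr0 addr0. Qed.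

Lemma vc_line_lam x j h : vc (h *: delta_mx ord0 (lam_idx j) + x) = vc x.
Proof. by rewrite /vc coord_line lam_v_idx_eq mulr0 addr0. Qed.

Lemma lam_line_z x j h : lam (h *: delta_mx ord0 (z_idx j) + x) = lam x.
Proof.
by apply/funext => k; rewrite /lam coord_line eq_sym lam_z_idx_eq mulr0 addr0.
Qed.

Lemma zc_line_z x j h : zc (h *: delta_mx ord0 (z_idx j) + x) = shift_at (zc x) j h.
Proof. by apply/funext => k; rewrite /zc coord_line z_idx_eq. Qed.

Lemma vc_line_z x j h : vc (h *: delta_mx ord0 (z_idx j) + x) = vc x.
Proof. by rewrite /vc coord_line z_v_idx_eq mulr0 addr0. Qed.

End PhaseSpace.

Section PartialDerivatives.
Variables (R : realType) (g N : nat).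
Implicit Types (x y : pt R g) (j k : 'I_g) (t : R).

Lemma Bpol_horner y t : (Bpol N y).[t] = b0 N y * \prod_(k < g) (t - lam y k).
Proof. by rewrite /Bpol hornerZ horner_prod; under eq_bigr do rewrite hornerXsubC. Qed.

Lemma Bpol_divXsubC y j : Bpol N y %/ ('X - (lam y j)%:P) =
  b0 N y *: \prod_(k < g | k != j) ('X - (lam y k)%:P).
Proof. by rewrite /Bpol (bigD1 j) //= divpZl mulKp // polyXsubC_eq0. Qed.

Lemma Bpol_deriv_node y j :
  (Bpol N y)^`().[lam y j] = b0 N y * prod_except (lam y) j (lam y j).
Proof.
rewrite /Bpol derivZ hornerZ (bigD1 j) //= derivM derivXsubC mul1r hornerD.
rewrite hornerM hornerXsubC subrr mul0r addr0 horner_prod.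
by under eq_bigr do rewrite hornerXsubC.
Qed.

Lemma Atil_horner y t : b0 N y != 0 ->
  (Atil N y).[t] = Aform (a0t R N) (lam y) (zc y) t.
Proof.
move=> b0y; rewrite /Atil /Aform hornerD hornerZ Bpol_horner mulrA divfK //.
congr (_ + _); rewrite horner_sum; apply: eq_bigr => j _.
rewrite hornerZ Bpol_divXsubC hornerZ horner_prod Bpol_deriv_node /node_weight.
under eq_bigr do rewrite hornerXsubC.
by rewrite -/(prod_except (lam y) j t) -[RHS]mulr1 -(mulVf b0y) !invfM; ring.
Qed.

Lemma b0_line_lam x j h : b0 N (h *: delta_mx ord0 (lam_idx j) + x) = b0 N x.
Proof. by rewrite /b0 vc_line_lam. Qed.

Lemma b0_line_z x j h : b0 N (h *: delta_mx ord0 (z_idx j) + x) = b0 N x.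
Proof. by rewrite /b0 vc_line_z. Qed.

Lemma pd_Bpol_z x j t : pd (fun y => (Bpol N y).[t]) x (z_idx j) = 0.
Proof.
apply: pd_is_derive (is_derive_cst (Bpol N x).[t] (0 : R) 1) => h.
by rewrite !Bpol_horner b0_line_z lam_line_z.
Qed.

Lemma pd_Bpol_lam x j t :
  pd (fun y => (Bpol N y).[t]) x (lam_idx j) = - b0 N x * prod_except (lam x) j t.
Proof.
have dB := is_deriveZ (b0 N x * prod_except (lam x) j t)
                     (is_derive_const_sub (t - lam x j) (0 : R)).
rewrite (pd_is_derive _ dB) => [|h /=]; first by rewrite /GRing.scale /= mulrN1 mulNr.
rewrite Bpol_horner b0_line_lam lam_line_lam (prod_sub_except _ j).
by rewrite shift_at_self prod_except_shift_at /GRing.scale /=; ring.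
Qed.

Lemma pd_Atil_z x j t : b0 N x != 0 ->
  pd (fun y => (Atil N y).[t]) x (z_idx j) =
    node_weight (lam x) j * prod_except (lam x) j t.
Proof.
move=> b0x; apply: pd_is_derive (is_derive_Aform_z _ _ _ _ _) => h.
by rewrite Atil_horner ?b0_line_z // lam_line_z zc_line_z.
Qed.

Lemma pd_Atil_lam x j t : b0 N x != 0 ->
  (forall k, k != j -> lam x k != lam x j) -> lam x j != 0 ->
  pd (fun y => (Atil N y).[t]) x (lam_idx j) =
    Aform_lam_rate (a0t R N) (lam x) (zc x) j * prod_except (lam x) j t.
Proof.
move=> b0x lam_inj lamj0.
apply: pd_is_derive (is_derive_Aform_lam _ _ _ lam_inj lamj0) => h.
by rewrite Atil_horner ?b0_line_lam // lam_line_lam zc_line_lam.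
Qed.

End PartialDerivatives.

Lemma pbr_proportional (R : realType) (g : nat) (F G : pt R g -> R) (x : pt R g)
    (p q alpha beta gamma delta : 'I_g -> R) :
  (forall j, pd F x (lam_idx j) = alpha j * p j) ->
  (forall j, pd F x (z_idx j) = beta j * p j) ->
  (forall j, pd G x (lam_idx j) = gamma j * q j) ->
  (forall j, pd G x (z_idx j) = delta j * q j) ->
  pbr F G x = \sum_(j < g) zc x j * (p j * q j) * (alpha j * delta j - beta j * gamma j).
Proof. by move=> Fl Fz Gl Gz; apply: eq_bigr => j _; rewrite Fl Fz Gl Gz; ring. Qed.

Section Brackets.
Variables (R : realType) (g N : nat) (x : pt R g).
Hypothesis b0x : b0 N x != 0.
Hypothesis lam_inj : forall j k : 'I_g, j != k -> lam x j != lam x k.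
Hypothesis lam_neq0 : forall j : 'I_g, lam x j != 0.

Let Bpol_z u j :
  pd (fun y => (Bpol N y).[u]) x (z_idx j) = 0 * prod_except (lam x) j u.
Proof. by rewrite pd_Bpol_z mul0r. Qed.

Lemma pbr_Bpol_Bpol s t :
  pbr (fun y => (Bpol N y).[s]) (fun y => (Bpol N y).[t]) x = 0.
Proof.
rewrite (pbr_proportional (fun j => pd_Bpol_lam N x j s) (Bpol_z s)
                          (fun j => pd_Bpol_lam N x j t) (Bpol_z t)).
by rewrite big1 // => j _; rewrite mulr0 mul0r subrr mulr0.
Qed.

Let Atil_lam u j := pd_Atil_lam (j := j) u b0x (fun k kj => lam_inj kj) (lam_neq0 j).

Lemma pbr_Atil_Atil s t :
  pbr (fun y => (Atil N y).[s]) (fun y => (Atil N y).[t]) x = 0.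
Proof.
rewrite (pbr_proportional (Atil_lam s) (fun j => pd_Atil_z j s b0x)
                          (Atil_lam t) (fun j => pd_Atil_z j t b0x)).
by rewrite big1 // => j _; rewrite [X in _ - X]mulrC subrr mulr0.
Qed.

Lemma pbr_Atil_Bpol s t : s != t ->
  pbr (fun y => (Atil N y).[s]) (fun y => (Bpol N y).[t]) x =
  ((Bpol N x).[s] * (Atil N x).[t] - (Atil N x).[s] * (Bpol N x).[t]) / (s - t).
Proof.
move=> st; rewrite (pbr_proportional (Atil_lam s) (fun j => pd_Atil_z j s b0x)
                                     (fun j => pd_Bpol_lam N x j t) (Bpol_z t)).
rewrite !Bpol_horner !Atil_horner // cross_difference_Aform // mulr_sumr.
by apply: eq_bigr => j _; ring.
Qed.

End Brackets.

Unset Implicit Arguments. Set Strict Implicit.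

Theorem mainTheorem7 (R : realType) (g N : nat) (x : pt R g) (lmb mu : R) :
  (1 <= g)%N ->
  (N = g.*2.+1 \/ N = g.*2.+2) ->
  (forall j k : 'I_g, j != k -> lam x j != lam x k) ->
  (forall j : 'I_g, lam x j != 0) ->
  (~~ odd N -> vc x != 0) ->
  [/\ pbr (fun y => (Atil N y).[lmb]) (fun y => (Atil N y).[mu]) x = 0,
      pbr (fun y => (Bpol N y).[lmb]) (fun y => (Bpol N y).[mu]) x = 0
    & lmb != mu ->
      pbr (fun y => (Atil N y).[lmb]) (fun y => (Bpol N y).[mu]) x =
      ((Bpol N x).[lmb] * (Atil N x).[mu] - (Atil N x).[lmb] * (Bpol N x).[mu])
        / (lmb - mu)].
Proof.
(* The identities hold for every g and N: the first two hypotheses only fix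
   the setting. *)
move=> _ _ lam_inj lam_neq0 v_neq0.
have b0x : b0 N x != 0.
  by rewrite /b0; case: ifP => [_ | /negbT /v_neq0 //]; exact: oner_neq0.
split; [exact: pbr_Atil_Atil | exact: pbr_Bpol_Bpol | exact: pbr_Atil_Bpol].
Qed.
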